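(* Let $M,N$ be weights of $\mathbb{R}^m,\mathbb{R}^n$, let $A\in\mathbb{R}^{m\times n}$ with $MA=AN$, and let $K\subseteq\mathbb{R}^n$ be a closed cone. Then $$(A\circ I\circ K)^{[*]}\subseteq (A^{[\dagger]})^{[*]}\circ I\circ K^{[*]}+\mathcal{N}\big((A\circ I)^{[*]}\big).$$ If moreover $A^{[\dagger]}\circ A\circ K\subseteq K$, then equality holds.
   Context: A weight is a real symmetric matrix $W$ with $W^2=I$. $\mathbb{R}^m$ and $\mathbb{R}^n$ carry weights $M\in\mathbb{R}^{m\times m}$ and $N\in\mathbb{R}^{n\times n}$, respectively. The indefinite inner product on the space with weight $W$ is $[x,y]=\langle x,Wy\rangle$. Indefinite matrix product: if $B$ has $p$ columns and $C$ has $p$ rows (or is a vector in $\mathbb{R}^p$), $p\in\{m,n\}$, and $W$ is the weight of $\mathbb{R}^p$, then $B\circ C:=BWC$. $I$ denotes an identity matrix of the appropriate size. Indefinite adjoint of $B\in\mathbb{R}^{p\times q}$: $B^{[*]}:=W_qB^TW_p$, where $W_p,W_q$ are the weights of $\mathbb{R}^p,\mathbb{R}^q$. Indefinite Moore–Penrose inverse: $A^{[\dagger]}$ is the unique $X\in\mathbb{R}^{n\times m}$ such that - $A\circ X\circ A=A$, - $X\circ A\circ X=X$, - $(A\circ X)^{[*]}=A\circ X$, - $(X\circ A)^{[*]}=X\circ A$. It equals $NA^\dagger M$. Range and null space: for a matrix $B$ with $q$ columns, $\mathcal{R}(B)=\{B\circ x:x\in\mathbb{R}^q\}$ and $\mathcal{N}(B)=\{x\in\mathbb{R}^q:B\circ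 x=0\}$. A cone is a nonempty set closed under addition and under multiplication by nonnegative scalars. For $S$ a subset of $\mathbb{R}^p$ with weight $W$, the dual is $S^{[*]}=\{x\in\mathbb{R}^p:[x,t]\ge0\ \forall t\in S\}$. For a matrix $B$ and a set $S$, $B\circ S=\{B\circ s:s\in S\}$. The sum of sets is the Minkowski sum. *)

From HB Require Import structures.
From mathcomp Require Import all_boot all_order all_algebra.
Set Implicit Arguments. Unset Strict Implicit. Unset Printing Implicit Defensive.
Import Order.TTheory GRing.Theory Num.Theory.
Local Open Scope ring_scope.

Section Indef.
Variable R : realFieldType.

Definition is_weight (p : nat) (W : 'M[R]_p) : Prop :=
  W^T = W /\ W *m W = 1%:M.

(* Indefinite product B o C := B W C, W the weight of R^p (the shared dim). *)
Definition iprod (q p r : nat) (W : 'M[R]_p) (B : 'M[R]_(q, p)) (C : 'M[R]_(p, r))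
  : 'M[R]_(q, r) := B *m W *m C.

Definition iadj (p q : nat) (Wp : 'M[R]_p) (Wq : 'M[R]_q) (B : 'M[R]_(p, q))
  : 'M[R]_(q, p) := Wq *m B^T *m Wp.

Definition iip (p : nat) (W : 'M[R]_p) (x y : 'cV[R]_p) : R :=
  (x^T *m (W *m y)) 0 0.

Definition vset (p : nat) := 'cV[R]_p -> Prop.

Definition subset_v (p : nat) (S T : vset p) : Prop := forall x, S x -> T x.

Definition idual (p : nat) (W : 'M[R]_p) (S : vset p) : vset p :=
  fun x => forall t, S t -> 0 <= iip W x t.

(* B o S = { B o s : s in S }, W the weight of the column space R^p of B. *)
Definition imgset (q p : nat) (W : 'M[R]_p) (B : 'M[R]_(q, p)) (S : vset p)
  : vset q := fun y => exists2 s, S s & y = iprod W B s.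

Definition msum (p : nat) (S T : vset p) : vset p :=
  fun y => exists a b, [/\ S a, T b & y = a + b].

Definition inull (p q : nat) (Wq : 'M[R]_q) (B : 'M[R]_(p, q)) : vset q :=
  fun x => iprod Wq B x = 0.

Definition is_cone (p : nat) (K : vset p) : Prop :=
  [/\ exists x, K x,
      forall x y, K x -> K y -> K (x + y)
    & forall (a : R) x, 0 <= a -> K x -> K (a *: x)].

(* Topologically closed (Euclidean/product topology, via the max-norm):
   the complement is open. *)
Definition is_closed (p : nat) (K : vset p) : Prop :=
  forall x, ~ K x -> exists2 e : R, 0 < e &
    forall y : 'cV[R]_p, (forall i, `|y i 0 - x i 0| < e) -> ~ K y.

(* X is the indefinite Moore-Penrose inverse of A (the unique such X). *)
Definition is_indef_mp (m n : nat) (M : 'M[R]_m) (N : 'M[R]_n)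
  (A : 'M[R]_(m, n)) (X : 'M[R]_(n, m)) : Prop :=
  [/\ iprod M (iprod N A X) A = A,
      iprod N (iprod M X A) X = X,
      iadj M M (iprod N A X) = iprod N A X
    & iadj N N (iprod M X A) = iprod M X A].

End Indef.

From HB Require Import structures.
From mathcomp Require Import all_boot all_order all_algebra.
Set Implicit Arguments.
Unset Strict Implicit.
Unset Printing Implicit Defensive.
Import Order.TTheory GRing.Theory Num.Theory.
Local Open Scope ring_scope.

(* Since [N^2 = I], the cone [A o I o K] is just [A K]; since [M A = A N],
   its dual is the preimage of [K^[*]] under [A^T]: [y] is in it iff [A^T y] is in [K^[*]].
   The Moore-Penrose identity [A^T M X^T N A^T = A^T] then shows that
   [y = M X^T N (A^T y) + (y - M X^T N A^T y)] is a decomposition into the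
   two summands of the right-hand side.  Conversely, for [y = M X^T N z + b]
   with [A^T b = 0], [[A^T y, s] = [z, X o A o s]], which is nonnegative for
   [s] in [K] when [A^[dagger] o A o K] lies in [K]. *)

Lemma iipE (R : realFieldType) (p : nat) (W : 'M[R]_p) (x y : 'cV[R]_p) :
  iip W x y = (x^T *m W *m y) 0 0.
Proof. by rewrite /iip mulmxA. Qed.

Section IndefiniteDual.
Variables (R : realFieldType) (m n : nat).
Variables (M : 'M[R]_m) (N : 'M[R]_n) (A : 'M[R]_(m, n)).
Hypotheses (wM : is_weight M) (wN : is_weight N) (MA : M *m A = A *m N).

Lemma imgset_AI (K : vset R n) y :
  imgset N (iprod N A 1%:M) K y <-> exists2 s, K s & y = A *m s.
Proof.
case: wN => _ NN; rewrite /imgset /iprod mulmx1 -mulmxA NN mulmx1.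
by split=> -[s Ks ->]; exists s.
Qed.

Lemma inull_adj_AI b : inull M (iadj M N (iprod N A 1%:M)) b <-> A^T *m b = 0.
Proof.
case: wM => _ MM; case: wN => NT NN.
rewrite /inull /iprod /iadj mulmx1 trmx_mul NT !mulmxA NN mul1mx.
by rewrite -(mulmxA _ M M) MM mulmx1.
Qed.

Lemma iip_mulmxr (y : 'cV[R]_m) (s : 'cV[R]_n) :
  iip M y (A *m s) = iip N (A^T *m y) s.
Proof. by rewrite !iipE trmx_mul trmxK !mulmxA -(mulmxA _ A N) -MA !mulmxA. Qed.

Lemma idual_imgset_AI (K : vset R n) y :
  idual M (imgset N (iprod N A 1%:M) K) y <-> idual N K (A^T *m y).
Proof.
split=> [Ky s Ks | Ky t /imgset_AI [s Ks ->]].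
  by rewrite -iip_mulmxr; apply: Ky; apply/imgset_AI; exists s.
by rewrite iip_mulmxr; apply: Ky.
Qed.

Lemma imgset_iadjI (X : 'M[R]_(n, m)) (S : vset R n) y :
  imgset N (iprod N (iadj N M X) 1%:M) S y <->
  exists2 z, S z & y = M *m X^T *m N *m z.
Proof.
case: wN => _ NN; rewrite /imgset /iprod /iadj mulmx1.
by rewrite -(mulmxA _ N N) NN mulmx1; split=> -[z Sz ->]; exists z.
Qed.

Lemma indef_mp_trmx (X : 'M[R]_(n, m)) :
  is_indef_mp M N A X -> A^T *m M *m X^T *m N *m A^T = A^T.
Proof.
case: wM => MT _; case: wN => NT _ [AXA _ _ _].
by move: AXA; rewrite /iprod => /(congr1 trmx); rewrite !trmx_mul MT NT !mulmxA.
Qed.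

Lemma iip_adj_mp (X : 'M[R]_(n, m)) (z s : 'cV[R]_n) :
  iip N (A^T *m (M *m X^T *m N *m z)) s = iip N z (iprod N (iprod M X A) s).
Proof.
case: wM => MT _; case: wN => NT _.
by rewrite !iipE /iprod !trmx_mul !trmxK MT NT !mulmxA.
Qed.

Lemma idual_image_sub (X : 'M[R]_(n, m)) (K : vset R n) :
  is_indef_mp M N A X ->
  subset_v (idual M (imgset N (iprod N A 1%:M) K))
    (msum (imgset N (iprod N (iadj N M X) 1%:M) (idual N K))
          (inull M (iadj M N (iprod N A 1%:M)))).
Proof.
move=> /indef_mp_trmx mpX y /idual_imgset_AI KAy.
pose a := M *m X^T *m N *m (A^T *m y).
exists a, (y - a); split; last by rewrite addrC subrK.
- by apply/imgset_iadjI; exists (A^T *m y).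
- by apply/inull_adj_AI; rewrite mulmxBr /a !mulmxA mpX subrr.
Qed.

Lemma msum_sub_idual_image (X : 'M[R]_(n, m)) (K : vset R n) :
  subset_v (imgset N (iprod M X A) K) K ->
  subset_v (msum (imgset N (iprod N (iadj N M X) 1%:M) (idual N K))
                 (inull M (iadj M N (iprod N A 1%:M))))
    (idual M (imgset N (iprod N A 1%:M) K)).
Proof.
move=> XAK _ [a [b [/imgset_iadjI [z Kz ->] /inull_adj_AI Ab ->]]].
apply/idual_imgset_AI => s Ks.
rewrite mulmxDr Ab addr0 iip_adj_mp.
by apply: Kz; apply: XAK; exists s.
Qed.

End IndefiniteDual.

Theorem theorem3p4 (R : realFieldType) (m n : nat)
  (M : 'M[R]_m) (N : 'M[R]_n) (A : 'M[R]_(m, n)) (X : 'M[R]_(n, m))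
  (K : vset R n) :
  is_weight M -> is_weight N -> M *m A = A *m N ->
  is_cone K -> is_closed K ->
  is_indef_mp M N A X ->
  subset_v (idual M (imgset N (iprod N A 1%:M) K))
    (msum (imgset N (iprod N (iadj N M X) 1%:M) (idual N K))
          (inull M (iadj M N (iprod N A 1%:M))))
  /\
  (subset_v (imgset N (iprod M X A) K) K ->
   forall y, idual M (imgset N (iprod N A 1%:M) K) y <->
     msum (imgset N (iprod N (iadj N M X) 1%:M) (idual N K))
          (inull M (iadj M N (iprod N A 1%:M))) y).
Proof.
move=> wM wN MA _ _ mpX.
have sub := idual_image_sub wM wN MA mpX.
split=> // XAK y; split; first exact: sub.
exact: (msum_sub_idual_image wM wN MA XAK).
Qed.
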